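(* Let $\ell:K(H\times\mathrm{Id})\to HM$ be an abstract GSOS rule with $\ell$-interpretation $b:KC\to C$, and let $k=c^{-1}\cdot Hb^\sharp:HMC\to C$. Then $(C,k)$ is a completely iterative algebra for the functor $HM$.
   Context: Let $\mathcal A$ be a category with binary products and coproducts, let $H:\mathcal A\to\mathcal A$ be a functor with a terminal coalgebra $c:C\to HC$ (so $c$ is an isomorphism by Lambek's lemma), and let $K:\mathcal A\to\mathcal A$ be a functor such that every object $X$ has a free $K$-algebra $\varphi_X:KMX\to MX$ with universal morphism $\eta_X:X\to MX$. Then $(M,\eta,\mu)$ is the free monad on $K$, and $\kappa=\varphi\cdot K\eta:K\to M$. For a $K$-algebra $a:KA\to A$ let $a^\sharp:MA\to A$ be the unique $K$-algebra homomorphism with $a^\sharp\cdot\eta_A=\mathrm{id}_A$; it is an Eilenberg–Moore algebra for $M$. An abstract GSOS rule is a natural transformation $\ell:K(H\times\mathrm{Id})\to HM$; its $\ell$-interpretation is the unique morphism $b:KC\to C$ with $c\cdot b=Hb^\sharp\cdot\ell_C\cdot K\langle c,\mathrm{id}_C\rangle$. For an endofunctor $G$, a flat equation morphism in an object $A$ is a morphism $e:X\to GX+A$; a $G$-algebra $a:GA\to A$ is a completely iterative algebra (cia) if every flat equation morphism $e:X\to GX+A$ has a unique solution, i.e. a unique $e^\dagger:X\to A$ with $e^\dagger=[a,\mathrm{id}_A]\cdot(Ge^\dagger+\mathrm{id}_A)\cdot e$. *)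

From Stdlib Require Import Classical FunctionalExtensionality.

Set Implicit Arguments.
Unset Strict Implicit.

Record Category := {
  Obj :> Type;
  Hom : Obj -> Obj -> Type;
  idm : forall A, Hom A A;
  comp : forall A B C, Hom B C -> Hom A B -> Hom A C;
  comp_id_l : forall A B (f : Hom A B), comp (idm B) f = f;
  comp_id_r : forall A B (f : Hom A B), comp f (idm A) = f;
  comp_assoc : forall A B C D (h : Hom C D) (g : Hom B C) (f : Hom A B),
      comp h (comp g f) = comp (comp h g) f
}.
Arguments Hom {c} _ _.
Arguments idm {c} _.
Arguments comp {c} {A B C} _ _.

Notation "g ∘ f" := (comp g f) (at level 40, left associativity).

Record Functor (C : Category) := {
  fobj :> C -> C;
  fmap : forall A B, Hom A B -> Hom (fobj A) (fobj B);
  fmap_id : forall A, fmap (idm A) = idm (fobj A);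
  fmap_comp : forall A B D (g : Hom B D) (f : Hom A B),
      fmap (g ∘ f) = fmap g ∘ fmap f
}.
Arguments fmap {C} _ {A B} _.

Record HasProducts (C : Category) := {
  prod : C -> C -> C;
  pi1 : forall A B, Hom (prod A B) A;
  pi2 : forall A B, Hom (prod A B) B;
  pair : forall X A B, Hom X A -> Hom X B -> Hom X (prod A B);
  pi1_pair : forall X A B (f : Hom X A) (g : Hom X B), pi1 A B ∘ pair f g = f;
  pi2_pair : forall X A B (f : Hom X A) (g : Hom X B), pi2 A B ∘ pair f g = g;
  pair_unique : forall X A B (f : Hom X A) (g : Hom X B) (h : Hom X (prod A B)),
      pi1 A B ∘ h = f -> pi2 A B ∘ h = g -> h = pair f g
}.
Arguments prod {C} _ _ _.
Arguments pi1 {C} _ {A B}.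
Arguments pi2 {C} _ {A B}.
Arguments pair {C} _ {X A B} _ _.

Record HasCoproducts (C : Category) := {
  coprod : C -> C -> C;
  inl : forall A B, Hom A (coprod A B);
  inr : forall A B, Hom B (coprod A B);
  copair : forall A B X, Hom A X -> Hom B X -> Hom (coprod A B) X;
  copair_inl : forall A B X (f : Hom A X) (g : Hom B X), copair f g ∘ inl A B = f;
  copair_inr : forall A B X (f : Hom A X) (g : Hom B X), copair f g ∘ inr A B = g;
  copair_unique : forall A B X (f : Hom A X) (g : Hom B X) (h : Hom (coprod A B) X),
      h ∘ inl A B = f -> h ∘ inr A B = g -> h = copair f g
}.
Arguments coprod {C} _ _ _.
Arguments inl {C} _ {A B}.
Arguments inr {C} _ {A B}.
Arguments copair {C} _ {A B X} _ _.

Definition coprod_map {C : Category} (S : HasCoproducts C) {A A' B B' : C}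
  (f : Hom A A') (g : Hom B B') : Hom (coprod S A B) (coprod S A' B') :=
  copair S (inl S ∘ f) (inr S ∘ g).

Record TerminalCoalgebra {C : Category} (H : Functor C) := {
  tc_carrier : C;
  tc_str : Hom tc_carrier (H tc_carrier);
  unfold : forall X, Hom X (H X) -> Hom X tc_carrier;
  unfold_hom : forall X (x : Hom X (H X)),
      tc_str ∘ unfold x = fmap H (unfold x) ∘ x;
  unfold_unique : forall X (x : Hom X (H X)) (h : Hom X tc_carrier),
      tc_str ∘ h = fmap H h ∘ x -> h = unfold x
}.
Arguments tc_carrier {C H} _.
Arguments tc_str {C H} _.

Record FreeAlgebras {C : Category} (K : Functor C) := {
  M0 : C -> C;
  phi : forall X, Hom (K (M0 X)) (M0 X);
  eta : forall X, Hom X (M0 X);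
  ext : forall X A, Hom (K A) A -> Hom X A -> Hom (M0 X) A;
  ext_eta : forall X A (a : Hom (K A) A) (f : Hom X A), ext a f ∘ eta X = f;
  ext_hom : forall X A (a : Hom (K A) A) (f : Hom X A),
      ext a f ∘ phi X = a ∘ fmap K (ext a f);
  ext_unique : forall X A (a : Hom (K A) A) (f : Hom X A) (h : Hom (M0 X) A),
      h ∘ eta X = f -> h ∘ phi X = a ∘ fmap K h -> h = ext a f
}.
Arguments M0 {C K} _ _.
Arguments phi {C K} _ _.
Arguments eta {C K} _ _.
Arguments ext {C K} _ {X A} _ _.

Definition Mmap {C : Category} {K : Functor C} (F : FreeAlgebras K) {X Y : C}
  (f : Hom X Y) : Hom (M0 F X) (M0 F Y) :=
  ext F (phi F Y) (eta F Y ∘ f).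

Definition sharp {C : Category} {K : Functor C} (F : FreeAlgebras K) {A : C}
  (a : Hom (K A) A) : Hom (M0 F A) A :=
  ext F a (idm A).

Definition HMobj {C : Category} (H K : Functor C) (F : FreeAlgebras K) (X : C) : C :=
  H (M0 F X).
Definition HMmap {C : Category} (H K : Functor C) (F : FreeAlgebras K) {X Y : C}
  (f : Hom X Y) : Hom (HMobj H F X) (HMobj H F Y) :=
  fmap H (Mmap F f).

Definition GSOS_rule {C : Category} (P : HasProducts C) (H K : Functor C)
  (F : FreeAlgebras K) (l : forall X, Hom (K (prod P (H X) X)) (H (M0 F X))) : Prop :=
  forall X Y (f : Hom X Y),
    l Y ∘ fmap K (pair P (fmap H f ∘ pi1 P) (f ∘ pi2 P))
    = fmap H (Mmap F f) ∘ l X.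

Definition is_interpretation {C : Category} (P : HasProducts C) (H K : Functor C)
  (T : TerminalCoalgebra H) (F : FreeAlgebras K)
  (l : forall X, Hom (K (prod P (H X) X)) (H (M0 F X)))
  (b : Hom (K (tc_carrier T)) (tc_carrier T)) : Prop :=
  (tc_str T ∘ b
   = fmap H (sharp F b) ∘ l (tc_carrier T) ∘ fmap K (pair P (tc_str T) (idm _)))
  /\ forall b' : Hom (K (tc_carrier T)) (tc_carrier T),
       tc_str T ∘ b'
       = fmap H (sharp F b') ∘ l (tc_carrier T) ∘ fmap K (pair P (tc_str T) (idm _))
       -> b' = b.

(* For an endofunctor G given by (Gobj, Gmap): the algebra a : G A -> A is a cia
   if every flat equation morphism e : X -> G X + A has a unique solution. *)
Definition is_cia {C : Category} (S : HasCoproducts C)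
  (Gobj : C -> C) (Gmap : forall X Y, Hom X Y -> Hom (Gobj X) (Gobj Y))
  (A : C) (a : Hom (Gobj A) A) : Prop :=
  forall (X : C) (e : Hom X (coprod S (Gobj X) A)),
    exists s : Hom X A,
      s = copair S a (idm A) ∘ coprod_map S (Gmap X A s) (idm A) ∘ e
      /\ forall t : Hom X A,
           t = copair S a (idm A) ∘ coprod_map S (Gmap X A t) (idm A) ∘ e -> t = s.


(* (1) A general fact about algebras for an arbitrary endofunctor G: call an
   algebra a : GA -> A corecursive if every coalgebra d : Y -> GY has a unique
   coalgebra-to-algebra morphism t = a . Gt . d.  If moreover a has a right
   inverse r : A -> GA, then a is a cia: a flat equation e : X -> GX + A is
   turned into the coalgebra [[G inl, G inr . r] . e, G inr . r] on X + A, and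
   its unique morphism into a, restricted along inl, is the unique solution.

   (2) The GSOS part: (C, k) is corecursive for HM.  Every K-algebra a on A
   lifts via l to a K-algebra on HA x A, and a coalgebra w : W -> HMW extends
   along this lifted free algebra to a coalgebra on MW which is an
   l-bialgebra.  Bialgebras map into the terminal coalgebra by K-algebra
   homomorphisms into b, which yields existence; uniqueness comes from the
   fact that K-algebra extensions of coalgebra morphisms are coalgebra
   morphisms out of the extended coalgebra.  The right inverse of k is
   H eta_C . c, since b^# . eta_C = id. *)

Section CategoryFacts.
Context {C : Category}.

Lemma pair_comp (P : HasProducts C) {X Y A B : C}
  (f : Hom X A) (g : Hom X B) (h : Hom Y X) :
  pair P f g ∘ h = pair P (f ∘ h) (g ∘ h).
Proof.
  apply pair_unique; rewrite comp_assoc; [rewrite pi1_pair | rewrite pi2_pair];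
    reflexivity.
Qed.

Lemma pair_inj (P : HasProducts C) {X A B : C} {f f' : Hom X A} {g g' : Hom X B} :
  pair P f g = pair P f' g' -> f = f' /\ g = g'.
Proof.
  intro E; split.
  - rewrite <- (pi1_pair P f g), E, pi1_pair; reflexivity.
  - rewrite <- (pi2_pair P f g), E, pi2_pair; reflexivity.
Qed.

Lemma copair_comp (S : HasCoproducts C) {A B X Y : C}
  (f : Hom A X) (g : Hom B X) (k : Hom X Y) :
  k ∘ copair S f g = copair S (k ∘ f) (k ∘ g).
Proof.
  apply copair_unique; rewrite <- comp_assoc;
    [rewrite copair_inl | rewrite copair_inr]; reflexivity.
Qed.

Lemma copair_map (S : HasCoproducts C) {A A' B B' X : C}
  (f : Hom A' X) (g : Hom B' X) (u : Hom A A') (v : Hom B B') :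
  copair S f g ∘ coprod_map S u v = copair S (f ∘ u) (g ∘ v).
Proof.
  unfold coprod_map. rewrite copair_comp, !comp_assoc, copair_inl, copair_inr.
  reflexivity.
Qed.

Lemma iso_transpose {A B Y : C} (i : Hom B A) (j : Hom A B)
  (Hji : j ∘ i = idm B) (Hij : i ∘ j = idm A) (t : Hom Y A) (x : Hom Y B) :
  t = i ∘ x <-> j ∘ t = x.
Proof.
  split; intro E.
  - rewrite E, comp_assoc, Hji, comp_id_l; reflexivity.
  - rewrite <- E, comp_assoc, Hij, comp_id_l; reflexivity.
Qed.

End CategoryFacts.

Section FreeAlgebraFacts.
Context {C : Category} {K : Functor C} (F : FreeAlgebras K).

Lemma ext_fusion {X A B : C} (a : Hom (K A) A) (a' : Hom (K B) B)
  (h : Hom A B) (f : Hom X A) :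
  h ∘ a = a' ∘ fmap K h -> h ∘ ext F a f = ext F a' (h ∘ f).
Proof.
  intro Hh. apply ext_unique.
  - rewrite <- comp_assoc, ext_eta; reflexivity.
  - rewrite <- comp_assoc, ext_hom, comp_assoc, Hh, <- comp_assoc, <- fmap_comp.
    reflexivity.
Qed.

Lemma ext_Mmap {X Y A : C} (a : Hom (K A) A) (f : Hom Y A) (g : Hom X Y) :
  ext F a f ∘ Mmap F g = ext F a (f ∘ g).
Proof.
  unfold Mmap. rewrite (ext_fusion (phi F Y) a (ext F a f) (eta F Y ∘ g)).
  - rewrite comp_assoc, ext_eta; reflexivity.
  - apply ext_hom.
Qed.

Lemma sharp_Mmap {X A : C} (a : Hom (K A) A) (f : Hom X A) :
  sharp F a ∘ Mmap F f = ext F a f.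
Proof. unfold sharp. rewrite ext_Mmap, comp_id_l; reflexivity. Qed.

Lemma Mmap_id (X : C) : Mmap F (idm X) = idm (M0 F X).
Proof.
  symmetry. apply ext_unique.
  - rewrite comp_id_l, comp_id_r; reflexivity.
  - rewrite comp_id_l, fmap_id, comp_id_r; reflexivity.
Qed.

Lemma Mmap_comp {X Y Z : C} (g : Hom Y Z) (f : Hom X Y) :
  Mmap F (g ∘ f) = Mmap F g ∘ Mmap F f.
Proof. unfold Mmap at 2. rewrite ext_Mmap. unfold Mmap. rewrite comp_assoc; reflexivity. Qed.

Lemma sharp_natural {A B : C} (a : Hom (K A) A) (a' : Hom (K B) B) (h : Hom A B) :
  h ∘ a = a' ∘ fmap K h -> h ∘ sharp F a = sharp F a' ∘ Mmap F h.
Proof.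
  intro Hh. rewrite sharp_Mmap. unfold sharp.
  rewrite (ext_fusion a a' h (idm A) Hh), comp_id_r; reflexivity.
Qed.

Lemma ext_phi_eta {X A : C} (a : Hom (K A) A) (f : Hom X A) :
  ext F a f ∘ phi F X ∘ fmap K (eta F X) = a ∘ fmap K f.
Proof.
  rewrite ext_hom, <- comp_assoc, <- fmap_comp, ext_eta; reflexivity.
Qed.

End FreeAlgebraFacts.

Section CorecursiveAlgebras.
Context {C : Category} (S : HasCoproducts C) (G : C -> C)
  (Gmap : forall X Y, Hom X Y -> Hom (G X) (G Y)).
Hypothesis Gmap_id : forall X, Gmap X X (idm X) = idm (G X).
Hypothesis Gmap_comp : forall X Y Z (g : Hom Y Z) (f : Hom X Y),
  Gmap X Z (g ∘ f) = Gmap Y Z g ∘ Gmap X Y f.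

Definition is_corecursive (A : C) (a : Hom (G A) A) : Prop :=
  forall (Y : C) (d : Hom Y (G Y)),
    exists t : Hom Y A, t = a ∘ Gmap Y A t ∘ d
      /\ forall t' : Hom Y A, t' = a ∘ Gmap Y A t' ∘ d -> t' = t.

Lemma corecursive_unique {A Y : C} (a : Hom (G A) A) (d : Hom Y (G Y))
  (t t' : Hom Y A) :
  is_corecursive A a -> t = a ∘ Gmap Y A t ∘ d -> t' = a ∘ Gmap Y A t' ∘ d -> t = t'.
Proof.
  intros Hcor Ht Ht'. destruct (Hcor Y d) as [u [_ Hu]].
  rewrite (Hu t Ht), (Hu t' Ht'); reflexivity.
Qed.

Lemma corecursive_cia (A : C) (a : Hom (G A) A) (r : Hom A (G A)) :
  a ∘ r = idm A -> is_corecursive A a -> @is_cia C S G Gmap A a.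
Proof.
  intros Har Hcor X e.
  set (d := copair S (copair S (Gmap X (coprod S X A) (inl S)) (Gmap A (coprod S X A) (inr S) ∘ r) ∘ e)
                     (Gmap A (coprod S X A) (inr S) ∘ r)).
  assert (Hd : forall t : Hom (coprod S X A) A, a ∘ Gmap (coprod S X A) A t ∘ d =
    copair S (copair S (a ∘ Gmap X A (t ∘ inl S)) (a ∘ Gmap A A (t ∘ inr S) ∘ r) ∘ e)
             (a ∘ Gmap A A (t ∘ inr S) ∘ r)).
  { intro t. unfold d.
    rewrite !Gmap_comp, copair_comp, comp_assoc, copair_comp, !comp_assoc.
    reflexivity. }
  destruct (Hcor (coprod S X A) d) as [t [Ht Htu]].
  assert (Tinr : t ∘ inr S = idm A).
  { apply (corecursive_unique a r (t ∘ inr S) (idm A) Hcor).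
    - rewrite Ht at 1. rewrite Hd, copair_inr; reflexivity.
    - rewrite Gmap_id, comp_id_r, Har; reflexivity. }
  assert (Hsol : forall s : Hom X A,
    copair S a (idm A) ∘ coprod_map S (Gmap X A s) (idm A) ∘ e
    = copair S (a ∘ Gmap X A s) (a ∘ Gmap A A (idm A) ∘ r) ∘ e).
  { intro s. rewrite copair_map, Gmap_id, !comp_id_r, Har; reflexivity. }
  exists (t ∘ inl S). split.
  - rewrite Hsol, <- Tinr. rewrite Ht at 1.
    rewrite Hd, <- comp_assoc, copair_inl; reflexivity.
  - intros s' Hs'.
    assert (Et : copair S s' (idm A) = t).
    { apply Htu. rewrite Hd, copair_inl, copair_inr.
      rewrite <- Hsol, <- Hs', Gmap_id, comp_id_r, Har; reflexivity. }
    rewrite <- Et, copair_inl; reflexivity.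
Qed.

End CorecursiveAlgebras.

Section GSOSBialgebras.
Context {C : Category} (P : HasProducts C) (H K : Functor C) (F : FreeAlgebras K)
  (l : forall X, Hom (K (prod P (H X) X)) (H (M0 F X))).
Hypothesis Hl : @GSOS_rule C P H K F l.

Lemma HMmap_id (X : C) : HMmap H F (idm X) = idm (HMobj H F X).
Proof. unfold HMmap. rewrite Mmap_id; apply fmap_id. Qed.

Lemma HMmap_comp {X Y Z : C} (g : Hom Y Z) (f : Hom X Y) :
  HMmap H F (g ∘ f) = HMmap H F g ∘ HMmap H F f.
Proof. unfold HMmap. rewrite Mmap_comp; apply fmap_comp. Qed.

Definition HId_map {A B : C} (f : Hom A B) : Hom (prod P (H A) A) (prod P (H B) B) :=
  pair P (fmap H f ∘ pi1 P) (f ∘ pi2 P).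

Lemma HId_map_pair {X A B : C} (f : Hom A B) (x : Hom X (H A)) (y : Hom X A) :
  HId_map f ∘ pair P x y = pair P (fmap H f ∘ x) (f ∘ y).
Proof.
  unfold HId_map. rewrite pair_comp, <- !comp_assoc, pi1_pair, pi2_pair.
  reflexivity.
Qed.

Definition lift_alg {A : C} (a : Hom (K A) A) : Hom (K (prod P (H A) A)) (prod P (H A) A) :=
  pair P (fmap H (sharp F a) ∘ l A) (a ∘ fmap K (pi2 P)).

Lemma lift_alg_hom {A B : C} (a : Hom (K A) A) (a' : Hom (K B) B) (v : Hom A B) :
  v ∘ a = a' ∘ fmap K v -> HId_map v ∘ lift_alg a = lift_alg a' ∘ fmap K (HId_map v).
Proof.
  intro Hv.
  unfold lift_alg. rewrite HId_map_pair, pair_comp. f_equal.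
  - unfold HId_map. rewrite <- (comp_assoc (fmap H (sharp F a'))), Hl, !comp_assoc,
      <- !fmap_comp, (sharp_natural F a a' v Hv).
    reflexivity.
  - rewrite <- comp_assoc, <- fmap_comp. unfold HId_map. rewrite pi2_pair, fmap_comp.
    rewrite !comp_assoc, Hv; reflexivity.
Qed.

Definition is_bialgebra {A : C} (a : Hom (K A) A) (g : Hom A (H A)) : Prop :=
  g ∘ a = fmap H (sharp F a) ∘ l A ∘ fmap K (pair P g (idm A)).

Lemma bialgebra_iff_pair_hom {A : C} (a : Hom (K A) A) (g : Hom A (H A)) :
  is_bialgebra a g <->
  pair P g (idm A) ∘ a = lift_alg a ∘ fmap K (pair P g (idm A)).
Proof.
  unfold is_bialgebra, lift_alg.
  rewrite !pair_comp, comp_id_l, <- (comp_assoc a), <- fmap_comp, pi2_pair,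
    fmap_id, comp_id_r.
  split.
  - intro E; rewrite E; reflexivity.
  - intro E; apply (pair_inj P E).
Qed.

Definition lift_coalg {W : C} (w : Hom W (H (M0 F W))) : Hom (M0 F W) (H (M0 F W)) :=
  pi1 P ∘ ext F (lift_alg (phi F W)) (pair P w (eta F W)).

Lemma ext_lift_alg {W : C} (w : Hom W (H (M0 F W))) :
  ext F (lift_alg (phi F W)) (pair P w (eta F W)) = pair P (lift_coalg w) (idm _).
Proof.
  apply pair_unique; [reflexivity |].
  (* pi2 is a homomorphism from the lifted algebra back to phi *)
  rewrite (ext_fusion F (lift_alg (phi F W)) (phi F W) (pi2 P)).
  - rewrite pi2_pair, <- (comp_id_r (eta F W)). exact (Mmap_id F W).
  - unfold lift_alg. apply pi2_pair.
Qed.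

Lemma lift_coalg_eta {W : C} (w : Hom W (H (M0 F W))) :
  lift_coalg w ∘ eta F W = w.
Proof.
  unfold lift_coalg. rewrite <- comp_assoc, ext_eta, pi1_pair; reflexivity.
Qed.

Lemma lift_coalg_bialgebra {W : C} (w : Hom W (H (M0 F W))) :
  is_bialgebra (phi F W) (lift_coalg w).
Proof. apply bialgebra_iff_pair_hom. rewrite <- ext_lift_alg. apply ext_hom. Qed.

Lemma ext_coalgebra_hom {A W : C} (a : Hom (K A) A) (g : Hom A (H A))
  (w : Hom W (H (M0 F W))) (f : Hom W A) :
  is_bialgebra a g -> g ∘ f = fmap H (ext F a f) ∘ w ->
  g ∘ ext F a f = fmap H (ext F a f) ∘ lift_coalg w.
Proof.
  intros Hbi Hf. set (v := ext F a f).
  assert (Eg : pair P g (idm A) ∘ v = ext F (lift_alg a) (pair P (g ∘ f) f)).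
  { unfold v. rewrite (ext_fusion F a (lift_alg a) _ f).
    - rewrite pair_comp, comp_id_l; reflexivity.
    - apply bialgebra_iff_pair_hom, Hbi. }
  assert (Ew : HId_map v ∘ pair P (lift_coalg w) (idm _)
               = ext F (lift_alg a) (pair P (g ∘ f) f)).
  { rewrite <- ext_lift_alg, (ext_fusion F (lift_alg (phi F W)) (lift_alg a)).
    - rewrite HId_map_pair, Hf. unfold v. rewrite ext_eta; reflexivity.
    - apply lift_alg_hom, ext_hom. }
  rewrite <- Ew, HId_map_pair, pair_comp in Eg.
  apply (pair_inj P Eg).
Qed.

Section TerminalInterpretation.
Context (T : TerminalCoalgebra H) (b : Hom (K (tc_carrier T)) (tc_carrier T)).
Hypothesis Hb : is_bialgebra b (tc_str T).

Lemma terminal_coalgebra_hom_eq {X : C} (x : Hom X (H X)) (h h' : Hom X (tc_carrier T)) :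
  tc_str T ∘ h = fmap H h ∘ x -> tc_str T ∘ h' = fmap H h' ∘ x -> h = h'.
Proof.
  intros E E'. rewrite (unfold_unique E), (unfold_unique E').
  reflexivity.
Qed.

Lemma unfold_algebra_hom {Z : C} (a : Hom (K Z) Z) (g : Hom Z (H Z)) :
  is_bialgebra a g -> unfold T g ∘ a = b ∘ fmap K (unfold T g).
Proof.
  intro Hbi. set (u := unfold T g).
  set (dZ := lift_coalg (fmap H (eta F Z) ∘ g)).
  assert (Ga : g ∘ sharp F a = fmap H (sharp F a) ∘ dZ).
  { apply ext_coalgebra_hom; [exact Hbi |].
    rewrite comp_id_r, comp_assoc, <- fmap_comp, ext_eta, fmap_id, comp_id_l.
    reflexivity. }
  assert (Gb : tc_str T ∘ ext F b u = fmap H (ext F b u) ∘ dZ).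
  { apply ext_coalgebra_hom; [exact Hb |].
    rewrite comp_assoc, <- fmap_comp, ext_eta. apply unfold_hom. }
  assert (E : u ∘ sharp F a = ext F b u).
  { apply (terminal_coalgebra_hom_eq dZ); [| exact Gb].
    rewrite comp_assoc. unfold u. rewrite unfold_hom.
    rewrite <- comp_assoc, Ga, comp_assoc, <- fmap_comp; reflexivity. }
  (* precompose E with phi . K eta, which recovers a and b . K u *)
  rewrite <- (comp_id_r a) at 1. rewrite <- fmap_id.
  unfold sharp in E. rewrite <- (ext_phi_eta F a (idm Z)), !comp_assoc, E.
  apply ext_phi_eta.
Qed.

Lemma interpretation_corecursive {Y : C} (d : Hom Y (H (M0 F Y))) :
  exists t : Hom Y (tc_carrier T),
    tc_str T ∘ t = fmap H (ext F b t) ∘ d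
    /\ forall t', tc_str T ∘ t' = fmap H (ext F b t') ∘ d -> t' = t.
Proof.
  set (u := unfold T (lift_coalg d)).
  assert (Eu : u = ext F b (u ∘ eta F Y)).
  { apply ext_unique; [reflexivity |].
    apply unfold_algebra_hom, lift_coalg_bialgebra. }
  exists (u ∘ eta F Y). split.
  - rewrite <- Eu, comp_assoc. unfold u. rewrite unfold_hom.
    rewrite <- comp_assoc, lift_coalg_eta; reflexivity.
  - intros t' Ht'.
    assert (Et : ext F b t' = u).
    { apply unfold_unique, ext_coalgebra_hom; [exact Hb | exact Ht']. }
    rewrite <- (ext_eta F b t'), Et; reflexivity.
Qed.

Lemma interpretation_algebra_corecursive (cinv : Hom (H (tc_carrier T)) (tc_carrier T)) :
  cinv ∘ tc_str T = idm (tc_carrier T) -> tc_str T ∘ cinv = idm (H (tc_carrier T)) ->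
  is_corecursive (HMobj H F) (fun X Y f => HMmap H F f) (tc_carrier T)
    (cinv ∘ fmap H (sharp F b)).
Proof.
  intros Hcinv1 Hcinv2 Y d.
  assert (Hk : forall t : Hom Y (tc_carrier T),
    cinv ∘ fmap H (sharp F b) ∘ HMmap H F t ∘ d = cinv ∘ (fmap H (ext F b t) ∘ d)).
  { intro t. unfold HMmap, HMobj in *.
    rewrite <- !comp_assoc, (comp_assoc (fmap H (sharp F b))), <- fmap_comp, sharp_Mmap.
    reflexivity. }
  destruct (interpretation_corecursive d) as [t [Ht Hu]].
  exists t. split.
  - rewrite Hk. apply (iso_transpose _ _ Hcinv2 Hcinv1), Ht.
  - intros t' Ht'. apply Hu, (iso_transpose _ _ Hcinv2 Hcinv1). rewrite <- Hk; exact Ht'.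
Qed.

End TerminalInterpretation.
End GSOSBialgebras.

Theorem mainTheorem2 (C : Category) (P : HasProducts C) (S : HasCoproducts C)
  (H K : Functor C) (T : TerminalCoalgebra H) (F : FreeAlgebras K)
  (l : forall X, Hom (K (prod P (H X) X)) (H (M0 F X)))
  (Hl : @GSOS_rule C P H K F l)
  (b : Hom (K (tc_carrier T)) (tc_carrier T))
  (Hb : @is_interpretation C P H K T F l b)
  (cinv : Hom (H (tc_carrier T)) (tc_carrier T))
  (Hcinv1 : cinv ∘ tc_str T = idm (tc_carrier T))
  (Hcinv2 : tc_str T ∘ cinv = idm (H (tc_carrier T))) :
  @is_cia C S (HMobj H F) (fun X Y f => HMmap H F f) (tc_carrier T)
    (cinv ∘ fmap H (sharp F b)).
Proof.
  (* the right inverse of k is H eta . c, because b^# . eta = id *)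
  apply (corecursive_cia S (HMobj H F) (fun X Y f => HMmap H F f)
           (HMmap_id H K F) (@HMmap_comp _ H K F)
           _ _ (fmap H (eta F _) ∘ tc_str T)).
  - rewrite <- comp_assoc, (comp_assoc (fmap H (sharp F b))), <- fmap_comp.
    unfold sharp. rewrite ext_eta, fmap_id, comp_id_l; exact Hcinv1.
  - apply (interpretation_algebra_corecursive P H K F l Hl T b (proj1 Hb));
      assumption.
Qed.
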